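(* Assume the environments are defined by a class of linear spurious correlation latent SCMs $\mathcal{M}_\mathcal{E}$ and let $e^+$ be any test domain with $\mathcal{M}_{e^+}\in\mathcal{M}_\mathcal{E}$. Then for empirical risk minimization (i.e., with no constraint on $\theta\in\mathbb{R}^d$) in logistic regression, $$\mathbb{E}_{({\mathbf{x}}_{e^+},{\textnormal{y}}_{e^+})\sim\mathbb{P}_{\mathrm{test}}}[\ell_{\mathrm{LL}}(\theta^\top{\mathbf{x}}_{e^+},{\textnormal{y}}_{e^+})]\le\mathbb{E}_{({\mathbf{x}},{\textnormal{y}})\sim\mathbb{P}_{\mathrm{train}}}[\ell_{\mathrm{LL}}(\theta^\top{\mathbf{x}},{\textnormal{y}})]+\|\theta\|\sqrt{\lambda_1(e^+)}.$$
   Context: Setting. $\mathcal{E}$ is a set of domains; each domain $e$ has an SCM sharing exogenous noise ${\mathbf{u}}\sim\mathbb{P}_\mathcal{U}$, latent variables ${\mathbf{z}}$, observed ${\mathbf{x}}\in\mathbb{R}^d$ and target ${\textnormal{y}}\in\{-1,1\}$. Latent mechanisms $f_{e,i}$ may depend on $e$ (solution map $f_e:{\bm{u}}\mapsto{\bm{z}}$); the observed mechanisms are shared: ${\mathbf{x}}_e=g_{\mathbf{x}}(f_e({\mathbf{u}}))$ with $g_{\mathbf{x}}$ linear, and ${\textnormal{y}}$ is the sign of a linear function of ${\mathbf{z}}$; the SCMs are linear. The intervention set $\mathcal{I}(\mathcal{F}_\mathcal{E})=\{i:f_{e,i}\neq f_{e',i}\text{ for some }e,e'\}$ contains no ancestor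 of ${\textnormal{y}}$ (spurious correlation assumption). Training domains $\mathcal{E}_{\mathrm{train}}\subseteq\mathcal{E}$ have weights $\mathbb{P}(e)$ and $\mathbb{P}_{\mathrm{train}}=\sum_e\mathbb{P}(e)\mathbb{P}_e$; $\mathbb{P}_{\mathrm{test}}$ is the distribution of domain $e^+$. With the same ${\mathbf{u}}$, ${\mathbf{x}}_{e^+}=g_{\mathbf{x}}(f_{e^+}({\mathbf{u}}))$ and ${\mathbf{x}}_{e^+\to e}=g_{\mathbf{x}}(f_e({\mathbf{u}}))$. $\lambda_1(e^+)$ is the largest eigenvalue of $M_{e^+}:=\sum_{e\in\mathcal{E}_{\mathrm{train}}}\mathbb{P}(e)\mathbb{E}_{\mathbf{u}}[({\mathbf{x}}_{e^+}-{\mathbf{x}}_{e^+\to e})({\mathbf{x}}_{e^+}-{\mathbf{x}}_{e^+\to e})^\top]$. $\ell_{\mathrm{LL}}(t,y)=\log(1+e^{-yt})$ and $\|\cdot\|$ is the Euclidean norm. *)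

From HB Require Import structures.
From mathcomp Require Import all_boot all_order all_algebra.
From mathcomp Require Import all_classical all_reals all_analysis.
Set Implicit Arguments. Unset Strict Implicit. Unset Printing Implicit Defensive.
Import Order.TTheory GRing.Theory Num.Theory.
Import numFieldNormedType.Exports.
Local Open Scope classical_set_scope.
Local Open Scope ring_scope.

Section Defs.
Variable R : realType.

(* sign with convention sign(0) = 1, so that y takes values in {-1,1} *)
Definition sgn (t : R) : R := if 0 <= t then 1 else -1.

Definition ll_loss (t y : R) : R := ln (1 + expR (- (y * t))).

Definition dotc n (a b : 'cV[R]_n) : R := \sum_i a i 0 * b i 0.
Definition enorm n (a : 'cV[R]_n) : R := Num.sqrt (\sum_i a i 0 ^+ 2).

(* Linear latent SCM of one domain: z = A z + B u.
   Edge a -> b (a is a parent of b) iff A b a != 0. *)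
Definition pedge k (A : 'M[R]_k) : rel 'I_k := fun a b => A b a != 0.

Definition acyclic k (A : 'M[R]_k) : Prop :=
  forall i j : 'I_k, A i j != 0 -> ~~ connect (pedge A) i j.

(* i is an ancestor of y = sgn(w^T z): i ~> j for some j with w_j != 0 *)
Definition ancestor_y k (A : 'M[R]_k) (w : 'cV[R]_k) (i : 'I_k) : Prop :=
  exists j : 'I_k, w j 0 != 0 /\ connect (pedge A) i j.

(* mechanism f_{e,i} of latent i: row i of A e and row i of B e *)
Definition same_mech (E : Type) k m (A : E -> 'M[R]_k) (B : E -> 'M[R]_(k, m))
  (e1 e2 : E) (i : 'I_k) : Prop :=
  row i (A e1) = row i (A e2) /\ row i (B e1) = row i (B e2).

Definition intervened (E : Type) k m (A : E -> 'M[R]_k) (B : E -> 'M[R]_(k, m))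
  (i : 'I_k) : Prop := exists e1 e2 : E, ~ same_mech A B e1 e2 i.

Definition lin_spurious_class (E : Type) k m (A : E -> 'M[R]_k)
  (B : E -> 'M[R]_(k, m)) (w : 'cV[R]_k) : Prop :=
  (forall e, acyclic (A e)) /\
  (forall e i, ancestor_y (A e) w i -> ~ intervened A B i).

(* solution map f_e : u |-> z, the unique solution of z = A z + B u *)
Definition solmap k m (A : 'M[R]_k) (B : 'M[R]_(k, m)) (u : 'cV[R]_m) : 'cV[R]_k :=
  invmx (1%:M - A) *m (B *m u).

Section Prob.
Context (dT : measure_display) (T : measurableType dT) (P : probability T R).
Context (m k d : nat) (u : 'I_m -> T -> R) (E : Type)
  (A : E -> 'M[R]_k) (B : E -> 'M[R]_(k, m)) (G : 'M[R]_(d, k)) (w : 'cV[R]_k).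

Definition uvec (t : T) : 'cV[R]_m := \col_l u l t.
Definition zlat (e : E) (t : T) : 'cV[R]_k := solmap (A e) (B e) (uvec t).
Definition xobs (e : E) (t : T) : 'cV[R]_d := G *m zlat e t.
Definition ytar (e : E) (t : T) : R := sgn (dotc w (zlat e t)).

Definition test_risk (eplus : E) (theta : 'cV[R]_d) : R :=
  \int[P]_t ll_loss (dotc theta (xobs eplus t)) (ytar eplus t).

(* E_{P_train}[l(theta^T x, y)], P_train = sum_e P(e) P_e *)
Definition train_risk (Etr : seq E) (pe : E -> R) (theta : 'cV[R]_d) : R :=
  \sum_(e <- Etr) pe e * \int[P]_t ll_loss (dotc theta (xobs e t)) (ytar e t).

(* M_{e+} = sum_e P(e) E_u[(x_{e+} - x_{e+ -> e})(x_{e+} - x_{e+ -> e})^T] *)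
Definition Mmat (Etr : seq E) (pe : E -> R) (eplus : E) : 'M[R]_d :=
  \sum_(e <- Etr) pe e *:
    \matrix_(i, j) \int[P]_t ((xobs eplus t - xobs e t) i 0 *
                             (xobs eplus t - xobs e t) j 0).
End Prob.
End Defs.

Fixpoint inseq (E : Type) (x : E) (s : seq E) : Prop :=
  match s with [::] => False | y :: s' => y = x \/ inseq x s' end.

From HB Require Import structures.
From mathcomp Require Import all_boot all_order all_algebra.
From mathcomp Require Import all_classical all_reals all_analysis.
From mathcomp Require Import measurable_realfun ring lra.
From mathcomp Require Import complex spectral sesquilinear.
Import Order.TTheory GRing.Theory Num.Theory.
Import numFieldNormedType.Exports.
Set Implicit Arguments. Unset Strict Implicit. Unset Printing Implicit Defensive.
Local Open Scope ring_scope.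

(* The labels do not depend on the domain: y is a function of the ancestors
   of y only, none of them is intervened on, and by acyclicity the solution of
   z = A z + B u restricted to an ancestrally closed set is determined by the
   mechanisms on that set.  As the logistic loss is 1-Lipschitz in the score,
   the test risk thus exceeds the risk of training domain e by at most
   E|theta^T (x_{e+} - x_{e+ -> e})|.  Averaging over e and applying Jensen's
   inequality twice bounds the excess by sqrt (theta^T M_{e+} theta), and the
   spectral theorem, applied to M_{e+} as a Hermitian complex matrix, bounds
   this by |theta| sqrt (lambda_1). *)

Section LinearSCM.
Variable R : realType.

(* A nonzero coordinate of v with the fewest ancestors would need a nonzero
   parent coordinate, which has strictly fewer ancestors. *)
Lemma acyclic_fixed_on_support_eq0 k (A : 'M[R]_k) (v : 'cV[R]_k) : acyclic A ->
  (forall i, v i 0 != 0 -> v i 0 = \sum_j A i j * v j 0) -> v = 0.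
Proof.
move=> acA fixv; apply/matrixP => i0 j0; rewrite ord1 mxE.
apply/eqP/negPn/negP => vi0.
pose nanc i := #|[set x | connect (pedge A) x i]|.
case: (@arg_minnP _ i0 (fun i => v i 0 != 0) nanc vi0) => i vi imin.
have [j /andP[Aij vj]] : exists j, (A i j != 0) && (v j 0 != 0).
  apply/existsP; move: (vi); apply: contraNT => /existsPn noparent.
  rewrite fixv // big1 // => j _.
  have := noparent j; rewrite negb_and !negbK.
  by case/orP => /eqP->; rewrite ?mul0r ?mulr0.
have := imin j vj; apply/negP; rewrite -ltnNge.
apply: proper_card; apply/properP; split.
  apply/fintype.subsetP => x; rewrite !inE => /connect_trans; apply.
  exact: connect1.
by exists i; rewrite inE ?connect0 //; exact: acA.
Qed.

Lemma acyclic_unitmx k (A : 'M[R]_k) : acyclic A -> 1%:M - A \in unitmx.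
Proof.
move=> acA; rewrite unitmxE unitfE -det_tr; apply/negP => /det0P [v vn0 vA].
have /eqP : (1%:M - A) *m v^T = 0 by rewrite -[1%:M - A]trmxK -trmx_mul vA trmx0.
rewrite mulmxBl mul1mx subr_eq0 => /eqP vAv.
have /(congr1 trmx) : v^T = 0.
  by apply: (acyclic_fixed_on_support_eq0 acA) => i _; rewrite {1}vAv mxE.
by rewrite trmxK trmx0 => v0; rewrite v0 eqxx in vn0.
Qed.

Lemma solmap_fixed k m (A : 'M[R]_k) (B : 'M[R]_(k, m)) u : acyclic A ->
  solmap A B u = A *m solmap A B u + B *m u.
Proof.
move=> acA; have <- : (1%:M - A) *m solmap A B u = B *m u.
  by rewrite mulKVmx ?acyclic_unitmx.
by rewrite mulmxBl mul1mx addrC subrK.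
Qed.

Lemma solmap_eq_on k m (A1 A2 : 'M[R]_k) (B1 B2 : 'M[R]_(k, m)) (S : pred 'I_k)
    (u : 'cV[R]_m) :
  acyclic A1 -> acyclic A2 -> (forall i j, S i -> A2 i j != 0 -> S j) ->
  (forall i, S i -> row i A1 = row i A2 /\ row i B1 = row i B2) ->
  forall i, S i -> solmap A1 B1 u i 0 = solmap A2 B2 u i 0.
Proof.
move=> acA1 acA2 Sclosed Srows.
set z1 := solmap A1 B1 u; set z2 := solmap A2 B2 u.
pose dz := \col_i (if S i then z1 i 0 - z2 i 0 else 0).
suff /matrixP dz0 : dz = 0.
  move=> i Si; apply/eqP; rewrite -subr_eq0.
  by have := dz0 i 0; rewrite !mxE Si => ->.
apply: (acyclic_fixed_on_support_eq0 acA2) => i.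
rewrite mxE; case: ifP => Si; last by rewrite eqxx.
move=> _; have [/rowP rowA /rowP rowB] := Srows i Si.
have rowBu : (B1 *m u) i 0 = (B2 *m u) i 0.
  by rewrite !mxE; apply: eq_bigr => l _; have := rowB l; rewrite !mxE => ->.
rewrite {1}/z1 {1}/z2 (solmap_fixed B1 u acA1) (solmap_fixed B2 u acA2) -/z1 -/z2.
rewrite ![(_ + _ : 'cV[R]_k) i 0]mxE rowBu opprD addrACA subrr addr0 !mxE -sumrB.
apply: eq_bigr => j _; have := rowA j; rewrite !mxE => ->.
have [Sj|nSj] := boolP (S j); first by rewrite mulrBr.
suff -> : A2 i j = 0 by rewrite !mul0r subrr.
by apply/eqP; apply: contraNT nSj; exact: Sclosed.
Qed.

Lemma spurious_label_invariant (E : Type) k m (A : E -> 'M[R]_k)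
    (B : E -> 'M[R]_(k, m)) (w : 'cV[R]_k) (u : 'cV[R]_m) (e1 e2 : E) :
  lin_spurious_class A B w ->
  dotc w (solmap (A e1) (B e1) u) = dotc w (solmap (A e2) (B e2) u).
Proof.
case=> acyc spurious.
pose anc := [pred i | [exists j, (w j 0 != 0) && connect (pedge (A e2)) i j]].
have anc_closed i j : anc i -> A e2 i j != 0 -> anc j.
  move=> /existsP[l /andP[wl cil]] Aij; apply/existsP; exists l.
  by rewrite wl; apply: connect_trans cil; exact: connect1.
have anc_rows i : anc i -> same_mech A B e1 e2 i.
  move=> /existsP[l /andP[wl cil]].
  have notint := spurious e2 i (ex_intro _ l (conj wl cil)).
  by apply: contrapT => h; apply: notint; exists e1, e2.
have zeq := solmap_eq_on u (acyc e1) (acyc e2) anc_closed anc_rows.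
apply: eq_bigr => j _; have [->|wj] := eqVneq (w j 0) 0; first by rewrite !mul0r.
by rewrite zeq //; apply/existsP; exists j; rewrite wj connect0.
Qed.
End LinearSCM.

Section HermitianForm.
Variable C : numClosedFieldType.
Local Open Scope sesquilinear_scope.

Lemma spectral_diag_eigenvalue n (M : 'M[C]_n) i :
  M \is normalmx -> eigenvalue M (spectral_diag M 0 i).
Proof.
move=> /orthomx_spectralP Mdec; set P := spectralmx M in Mdec.
have Punit : P \in unitmx := spectral_unit M.
apply/eigenvalueP; exists (row i P).
  rewrite -row_mul {1}Mdec !mulmxA mulmxV // mul1mx.
  by apply/rowP => j; rewrite mul_diag_mx !mxE.
apply/negP => /eqP Pi0.
have := congr1 (fun X : 'M[C]_n => X i i) (unitarymxP (spectral_unitarymx M)).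
rewrite !mxE eqxx big1 => [/eqP|j _]; first by rewrite eq_sym oner_eq0.
by have := congr1 (fun r : 'rV_n => r 0 j) Pi0; rewrite !mxE => ->; rewrite mul0r.
Qed.

(* In the orthonormal eigenbasis the form is the weighted sum of the squared
   moduli of the coordinates of y, with the eigenvalues as weights. *)
Lemma hermitian_form_le n (M : 'M[C]_n) (c : C) (y : 'rV[C]_n) :
  M \is hermsymmx -> (forall i, spectral_diag M 0 i <= c) ->
  (y *m M *m y^t*) 0 0 <= c * (y *m y^t*) 0 0.
Proof.
move=> Mherm Dle; have /orthomx_spectralP Mdec := hermitian_normalmx Mherm.
set P := spectralmx M in Mdec; set D := spectral_diag M in Mdec Dle.
have Pu : P \is unitarymx := spectral_unitarymx M.
set v := y *m P^t*.
have vE : (P *m y^t*) = v^t* by rewrite trmx_mul map_mxM trmxCK.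
have formE : (y *m M *m y^t*) 0 0 = \sum_i D 0 i * (v 0 i * (v 0 i)^*).
  rewrite {1}Mdec invmx_unitary // !mulmxA -/v -mulmxA vE mul_mx_diag mxE.
  by apply: eq_bigr => i _; rewrite !mxE mulrAC mulrC.
have normE : (y *m y^t*) 0 0 = \sum_i v 0 i * (v 0 i)^*.
  rewrite -{1}[y]mulmx1 -(mulVmx (spectral_unit M)) invmx_unitary //.
  rewrite !mulmxA -/v -mulmxA vE mxE.
  by apply: eq_bigr => i _; rewrite !mxE.
rewrite formE normE mulr_sumr; apply: ler_sum => i _.
by apply: ler_wpM2r; [exact: mul_conjC_ge0 | exact: Dle].
Qed.
End HermitianForm.

Section SymmetricForm.
Variable R : rcfType.
Local Notation realc := (real_complex R).
Local Open Scope sesquilinear_scope.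

Lemma realc_real (r : R) : realc r \is Num.real.
Proof. by apply/complex_realP; exists r. Qed.

Lemma eigenvalue_map_realc n (M : 'M[R]_n) (r : R) :
  eigenvalue (map_mx realc M) (realc r) = eigenvalue M r.
Proof. by rewrite !eigenvalue_root_char -map_char_poly fmorph_root. Qed.

Lemma symmetric_form_le n (M : 'M[R]_n) (lam : R) (y : 'rV[R]_n) :
  M^T = M -> (forall a, eigenvalue M a -> a <= lam) ->
  (y *m M *m y^T) 0 0 <= lam * (y *m y^T) 0 0.
Proof.
move=> Msym lam_ub; set Mc := map_mx realc M.
have Mherm : Mc \is hermsymmx.
  rewrite is_hermitianmxE expr0 scale1r /Mc -{1}Msym.
  by apply/eqP/matrixP => i j; rewrite !mxE conj_Creal ?realc_real.
have Dle i : spectral_diag Mc 0 i <= realc lam.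
  have Dreal : spectral_diag Mc 0 i \is Num.real.
    exact: mxOverP (hermitian_spectral_diag_real Mherm) 0 i.
  rewrite -(RRe_real Dreal) lecR; apply: lam_ub.
  rewrite -eigenvalue_map_realc RRe_real //.
  exact/spectral_diag_eigenvalue/hermitian_normalmx.
have ycE : (map_mx realc y)^t* = map_mx realc y^T.
  by apply/matrixP => i j; rewrite !mxE conj_Creal ?realc_real.
have := hermitian_form_le (map_mx realc y) Mherm Dle.
by rewrite ycE -!map_mxM !mxE -rmorphM lecR.
Qed.
End SymmetricForm.

Section LogisticLoss.
Variable R : realType.

(* expR (s - t) bounds the ratio of 1 + expR s to 1 + expR t when s >= t. *)
Lemma softplus_sub_le (s t : R) : ln (1 + expR s) - ln (1 + expR t) <= `|s - t|.
Proof.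
have gt0 x : 0 < 1 + expR x :> R by rewrite addr_gt0 ?expR_gt0.
have [st|ts] := lerP s t.
  have : ln (1 + expR s) <= ln (1 + expR t).
    by rewrite ler_ln ?posrE ?gt0 // lerD2l ler_expR.
  lra.
have : 1 + expR s <= expR (s - t) * (1 + expR t).
  rewrite mulrDr mulr1 -expRD subrK lerD2r.
  by have := expR_ge1Dx (s - t); lra.
rewrite -ler_ln ?posrE ?mulr_gt0 ?expR_gt0 ?gt0 //.
rewrite lnM ?posrE ?expR_gt0 ?gt0 // expRK.
lra.
Qed.

Lemma sgn_pm1 (t : R) : sgn t = 1 \/ sgn t = -1.
Proof. by rewrite /sgn; case: ifP; [left | right]. Qed.

Lemma ll_loss_lipschitz (a b y : R) : y = 1 \/ y = -1 ->
  ll_loss a y - ll_loss b y <= `|a - b|.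
Proof.
move=> y_pm1; apply: le_trans (softplus_sub_le _ _) _.
have -> : - (y * a) - - (y * b) = y * (b - a) by ring.
by rewrite normrM distrC; case: y_pm1 => ->; rewrite ?normrN normr1 mul1r.
Qed.

Lemma ll_loss_ge0 (a y : R) : 0 <= ll_loss a y.
Proof. by rewrite /ll_loss ln_ge0 // lerDl expR_ge0. Qed.

Lemma ll_loss_le (a y : R) : y = 1 \/ y = -1 -> ll_loss a y <= ln 2 + `|a|.
Proof.
move=> y_pm1; have := ll_loss_lipschitz a 0 y_pm1.
by rewrite /ll_loss mulr0 oppr0 expR0 addr0; lra.
Qed.
End LogisticLoss.

Section WeightedSums.
Variables (R : realFieldType) (E : Type).

Lemma ler_sum_inseq (s : seq E) (F G : E -> R) :
  (forall e, inseq e s -> F e <= G e) -> \sum_(e <- s) F e <= \sum_(e <- s) G e.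
Proof.
elim: s => [|x s IHs] FG; first by rewrite !big_nil.
rewrite !big_cons; apply: lerD; first by apply: FG; left.
by apply: IHs => e es; apply: FG; right.
Qed.

Variables (s : seq E) (p : E -> R).
Hypotheses (p_ge0 : forall e, inseq e s -> 0 <= p e)
  (p_sum1 : \sum_(e <- s) p e = 1).

Lemma ler_wsum (F G : E -> R) : (forall e, inseq e s -> F e <= G e) ->
  \sum_(e <- s) p e * F e <= \sum_(e <- s) p e * G e.
Proof.
by move=> FG; apply: ler_sum_inseq => e es; rewrite ler_wpM2l ?p_ge0 ?FG.
Qed.

Lemma sqr_wsum_le (a : E -> R) :
  (\sum_(e <- s) p e * a e) ^+ 2 <= \sum_(e <- s) p e * a e ^+ 2.
Proof.
set m := \sum_(e <- s) p e * a e.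
have := @ler_wsum (fun=> 0) (fun e => (a e - m) ^+ 2) (fun e _ => sqr_ge0 _).
have -> : \sum_(e <- s) p e * (a e - m) ^+ 2 =
    \sum_(e <- s) p e * a e ^+ 2 - 2 * m * m + m ^+ 2 * \sum_(e <- s) p e.
  transitivity (\sum_(e <- s)
      (p e * a e ^+ 2 - 2 * m * (p e * a e) + m ^+ 2 * p e)).
    by apply: eq_bigr => e _; ring.
  by rewrite big_split sumrB /= -!mulr_sumr -/m.
by rewrite big1 => [|e _]; rewrite ?mulr0 // p_sum1; lra.
Qed.
End WeightedSums.

Lemma le_mul_sqrtr (R : rcfType) (x a b : R) :
  0 <= b -> x ^+ 2 <= a * b ^+ 2 -> x <= b * Num.sqrt a.
Proof.
move=> b_ge0 x2_le; apply: le_trans (ler_norm x) _.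
rewrite -sqrtr_sqr -[b]ger0_norm // -sqrtr_sqr -sqrtrM ?sqr_ge0 // mulrC.
exact: ler_wsqrtr.
Qed.

Section SquareIntegrable.
Variables (R : realType) (dT : measure_display) (T : measurableType dT)
  (P : probability T R).
Implicit Types f g : T -> R.

Definition Rintegrable f := P.-integrable setT (EFin \o f).
Definition sq_integrable f :=
  measurable_fun setT f /\ Rintegrable (fun t => f t ^+ 2).

Lemma Rintegrable_le f g : measurable_fun setT f -> Rintegrable g ->
  (forall t, `|f t| <= g t) -> Rintegrable f.
Proof.
move=> mf ig fg; apply: (le_integrable _ _ _ ig) => //.
  exact/measurable_EFinP.
by move=> t _ /=; rewrite lee_fin; apply: le_trans (fg t) (ler_norm _).
Qed.

Lemma Rintegrable_cst c : Rintegrable (fun _ => c).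
Proof. exact: finite_measure_integrable_cst. Qed.

Lemma RintegrableD f g : Rintegrable f -> Rintegrable g ->
  Rintegrable (fun t => f t + g t).
Proof. by move=> intf intg; apply: eq_integrable (integrableD _ intf intg). Qed.

Lemma RintegrableB f g : Rintegrable f -> Rintegrable g ->
  Rintegrable (fun t => f t - g t).
Proof. by move=> intf intg; apply: eq_integrable (integrableB _ intf intg). Qed.

Lemma RintegrableZl a f : Rintegrable f -> Rintegrable (fun t => a * f t).
Proof. by move=> intf; apply: eq_integrable (integrableZl _ a intf). Qed.

Lemma Rintegrable_sum (I : Type) (s : seq I) (F : I -> T -> R) :
  (forall i, Rintegrable (F i)) -> Rintegrable (fun t => \sum_(i <- s) F i t).
Proof.
move=> intF; have := @integrable_sum _ _ _ P _ measurableT _ s xpredT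
  (fun i => EFin \o F i) (fun i _ => intF i).
by apply: eq_integrable => // t _ /=; rewrite sumEFin.
Qed.

Lemma Rintegral_sum (I : Type) (s : seq I) (F : I -> T -> R) :
  (forall i, Rintegrable (F i)) ->
  \int[P]_t (\sum_(i <- s) F i t) = \sum_(i <- s) \int[P]_t F i t.
Proof.
move=> intF; elim: s => [|i s IHs].
  by under eq_Rintegral do rewrite big_nil; rewrite big_nil Rintegral_cst // mul0r.
under eq_Rintegral do rewrite big_cons.
by rewrite big_cons -IHs RintegralD //; [exact: intF | exact: Rintegrable_sum].
Qed.

Lemma sq_integrable_cst c : sq_integrable (fun _ => c).
Proof. by split; [exact: measurable_cst | exact: Rintegrable_cst]. Qed.

Lemma sq_integrableZl a f : sq_integrable f -> sq_integrable (fun t => a * f t).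
Proof.
case=> mf sqf; split; first exact: measurable_funM.
by apply: eq_integrable (integrableZl _ (a ^+ 2) sqf) => // t _ /=; rewrite exprMn.
Qed.

Lemma sq_integrableD f g : sq_integrable f -> sq_integrable g ->
  sq_integrable (fun t => f t + g t).
Proof.
case=> mf sqf [mg sqg]; split; first exact: measurable_funD.
apply: (Rintegrable_le (g := fun t => 2 * f t ^+ 2 + 2 * g t ^+ 2)).
- by apply: measurable_funX; exact: measurable_funD.
- by apply: RintegrableD; exact: RintegrableZl.
move=> t; rewrite ger0_norm ?sqr_ge0 //.
by have := sqr_ge0 (f t - g t); rewrite sqrrB sqrrD; lra.
Qed.

Lemma sq_integrableB f g : sq_integrable f -> sq_integrable g ->
  sq_integrable (fun t => f t - g t).
Proof.
move=> sqf /(sq_integrableZl (-1)) sqg.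
by under eq_fun do rewrite -mulN1r; exact: sq_integrableD.
Qed.

Lemma sq_integrable_sum (I : Type) (s : seq I) (F : I -> T -> R) :
  (forall i, sq_integrable (F i)) -> sq_integrable (fun t => \sum_(i <- s) F i t).
Proof.
move=> sqF; elim: s => [|i s IHs].
  by under eq_fun do rewrite big_nil; exact: sq_integrable_cst.
by under eq_fun do rewrite big_cons; exact: sq_integrableD.
Qed.

Lemma Rintegrable_mul f g : sq_integrable f -> sq_integrable g ->
  Rintegrable (fun t => f t * g t).
Proof.
case=> mf sqf [mg sqg].
apply: (Rintegrable_le (g := fun t => f t ^+ 2 + g t ^+ 2)).
- exact: measurable_funM.
- exact: RintegrableD.
move=> t; rewrite normrM -[f t ^+ 2]real_normK ?num_real //.
rewrite -[g t ^+ 2]real_normK ?num_real //.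
have := mulr_ge0 (normr_ge0 (f t)) (normr_ge0 (g t)).
by have := sqr_ge0 (`|f t| - `|g t|); rewrite sqrrB mulr2n; lra.
Qed.

Lemma Rintegrable_norm f : sq_integrable f -> Rintegrable (fun t => `|f t|).
Proof.
move=> sqf; have := Rintegrable_mul sqf (sq_integrable_cst 1).
apply: le_integrable => //.
  by case: sqf => mf _; apply/measurable_EFinP; exact: measurableT_comp.
by move=> t _ /=; rewrite mulr1 normr_id.
Qed.

Lemma sqr_Rintegral_le f : Rintegrable f -> Rintegrable (fun t => f t ^+ 2) ->
  (\int[P]_t f t) ^+ 2 <= \int[P]_t (f t ^+ 2).
Proof.
move=> intf intf2; set a := \int[P]_t f t.
have intZ : Rintegrable (fun t => 2 * a * f t) := RintegrableZl (2 * a) intf.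
have intB := RintegrableB intf2 intZ.
have : 0 <= \int[P]_t ((f t - a) ^+ 2).
  by apply: Rintegral_ge0 => t _; exact: sqr_ge0.
rewrite (@eq_Rintegral _ _ _ P setT (fun t => f t ^+ 2 - 2 * a * f t + a ^+ 2));
  last by move=> t _; rewrite sqrrB mulr2n; ring.
rewrite (RintegralD measurableT intB (Rintegrable_cst _)).
rewrite (RintegralB measurableT intf2 intZ).
rewrite (RintegralZl _ measurableT intf) Rintegral_cst // -/a.
have -> : fine (P setT) = 1 by have /= -> := probability_setT P.
lra.
Qed.

Lemma sqr_Rintegral_norm_le f : sq_integrable f ->
  (\int[P]_t `|f t|) ^+ 2 <= \int[P]_t (f t ^+ 2).
Proof.
move=> [mf sqf]; have := sqr_Rintegral_le (Rintegrable_norm (conj mf sqf)).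
have -> : (fun t => `|f t| ^+ 2) = (fun t => f t ^+ 2).
  by apply/funext => t; rewrite real_normK ?num_real.
exact.
Qed.

Lemma dotc_sq_integrable n (c : 'cV[R]_n) (X : T -> 'cV[R]_n) :
  (forall i, sq_integrable (fun t => X t i 0)) ->
  sq_integrable (fun t => dotc c (X t)).
Proof. by move=> sqX; apply: sq_integrable_sum => i; exact: sq_integrableZl. Qed.

Lemma quad_form_second_moment n (c : 'cV[R]_n) (X : T -> 'cV[R]_n) :
  (forall i, sq_integrable (fun t => X t i 0)) ->
  (c^T *m (\matrix_(i, j) \int[P]_t (X t i 0 * X t j 0)) *m c) 0 0 =
  \int[P]_t (dotc c (X t) ^+ 2).
Proof.
move=> sqX; have intXX i j : Rintegrable (fun t => X t i 0 * X t j 0).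
  exact: Rintegrable_mul.
rewrite (@eq_Rintegral _ _ _ P setT
    (fun t => \sum_j \sum_i c i 0 * c j 0 * (X t i 0 * X t j 0))); last first.
  move=> t _; rewrite /dotc expr2 mulr_sumr; apply: eq_bigr => j _.
  by rewrite mulr_suml; apply: eq_bigr => i _; ring.
rewrite Rintegral_sum => [|j]; last first.
  by apply: Rintegrable_sum => i; exact: RintegrableZl.
rewrite mxE; apply: eq_bigr => j _.
rewrite Rintegral_sum => [|i]; last exact: RintegrableZl.
rewrite mxE mulr_suml; apply: eq_bigr => i _.
by rewrite !mxE (RintegralZl _ measurableT (intXX i j)); ring.
Qed.
End SquareIntegrable.

Section EuclideanVectors.
Variable R : realType.

Lemma dotcB n (c a b : 'cV[R]_n) : dotc c (a - b) = dotc c a - dotc c b.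
Proof. by rewrite /dotc -sumrB; apply: eq_bigr => i _; rewrite !mxE mulrBr. Qed.

Lemma enorm_sqr n (a : 'cV[R]_n) : enorm a ^+ 2 = (a^T *m a) 0 0.
Proof.
rewrite sqr_sqrtr ?sumr_ge0 // => [|i _]; last exact: sqr_ge0.
by rewrite mxE; apply: eq_bigr => i _; rewrite mxE expr2.
Qed.
End EuclideanVectors.

Section Risk.
Variables (R : realType) (dT : measure_display) (T : measurableType dT)
  (P : probability T R) (m k d : nat) (u : 'I_m -> T -> R) (E : Type)
  (A : E -> 'M[R]_k) (B : E -> 'M[R]_(k, m)) (G : 'M[R]_(d, k)) (w : 'cV[R]_k).
Hypotheses (u_meas : forall l, measurable_fun setT (u l))
  (u_sq : forall l, P.-integrable setT (fun t => ((u l t) ^+ 2)%:E)).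
Local Notation zlat := (zlat u A B).
Local Notation xobs := (xobs u A B G).
Local Notation ytar := (ytar u A B w).

Lemma zlat_sq_integrable e i : sq_integrable P (fun t => zlat e t i 0).
Proof.
have -> : (fun t => zlat e t i 0) =
    (fun t => \sum_l (invmx (1%:M - A e) *m B e) i l * u l t).
  apply/funext => t; rewrite /zlat /solmap mulmxA mxE.
  by apply: eq_bigr => l _; rewrite [uvec _ _ _ _]mxE.
apply: sq_integrable_sum => l; apply: sq_integrableZl.
by split; [exact: u_meas | exact: u_sq].
Qed.

Lemma xobs_sq_integrable e i : sq_integrable P (fun t => xobs e t i 0).
Proof.
under eq_fun do rewrite mxE.
by apply: sq_integrable_sum => j; apply: sq_integrableZl; exact: zlat_sq_integrable.
Qed.

Lemma xobs_diff_sq_integrable e e' i :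
  sq_integrable P (fun t => (xobs e t - xobs e' t) i 0).
Proof.
have -> : (fun t => (xobs e t - xobs e' t) i 0) =
    (fun t => xobs e t i 0 - xobs e' t i 0) by apply/funext => t; rewrite !mxE.
by apply: sq_integrableB; exact: xobs_sq_integrable.
Qed.

Lemma ytar_measurable e : measurable_fun setT (ytar e).
Proof.
apply: measurable_fun_ifT; last 2 first; [exact: measurable_cst.. |].
apply: measurable_fun_ler; first exact: measurable_cst.
exact: (dotc_sq_integrable w (zlat_sq_integrable e)).1.
Qed.

Lemma ll_risk_integrable (theta : 'cV[R]_d) e e' :
  Rintegrable P (fun t => ll_loss (dotc theta (xobs e t)) (ytar e' t)).
Proof.
have score_sq := dotc_sq_integrable theta (xobs_sq_integrable e).
apply: (Rintegrable_le (g := fun t => ln 2 + `|dotc theta (xobs e t)|)).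
- apply: measurableT_comp; first exact: measurable_ln.
  apply: measurable_funD; first exact: measurable_cst.
  apply: measurableT_comp; first exact: measurable_expR.
  apply/measurable_funN/measurable_funM; first exact: ytar_measurable.
  exact: score_sq.1.
- by apply: RintegrableD; [exact: Rintegrable_cst | exact: Rintegrable_norm].
- by move=> t; rewrite ger0_norm ?ll_loss_ge0 ?ll_loss_le //; exact: sgn_pm1.
Qed.

Lemma Mmat_sym (Etr : seq E) (pe : E -> R) (eplus : E) :
  (Mmat P u A B G Etr pe eplus)^T = Mmat P u A B G Etr pe eplus.
Proof.
apply/matrixP => i j; rewrite /Mmat mxE !summxE; apply: eq_bigr => e _.
by rewrite !mxE; congr (_ * _); apply: eq_Rintegral => t _; rewrite mulrC.
Qed.

Lemma Mmat_quad_form (theta : 'cV[R]_d) (Etr : seq E) (pe : E -> R) (eplus : E) :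
  (theta^T *m Mmat P u A B G Etr pe eplus *m theta) 0 0 =
  \sum_(e <- Etr) pe e * \int[P]_t (dotc theta (xobs eplus t - xobs e t) ^+ 2).
Proof.
rewrite /Mmat mulmx_sumr mulmx_suml summxE; apply: eq_bigr => e _.
rewrite -scalemxAr -scalemxAl mxE quad_form_second_moment //.
exact: xobs_diff_sq_integrable.
Qed.

Hypothesis spurious : lin_spurious_class A B w.

Lemma ytar_invariant e e' t : ytar e t = ytar e' t.
Proof. by rewrite /ytar /zlat (spurious_label_invariant _ e e' spurious). Qed.

Lemma ll_risk_le_shift (theta : 'cV[R]_d) e e' :
  \int[P]_t ll_loss (dotc theta (xobs e' t)) (ytar e' t) <=
  \int[P]_t ll_loss (dotc theta (xobs e t)) (ytar e t) +
  \int[P]_t `|dotc theta (xobs e' t - xobs e t)|.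
Proof.
rewrite -lerBlDl -(RintegralB measurableT (ll_risk_integrable theta e' e')
  (ll_risk_integrable theta e e)).
apply: le_Rintegral => //.
- by apply: RintegrableB; exact: ll_risk_integrable.
- exact/Rintegrable_norm/dotc_sq_integrable/xobs_diff_sq_integrable.
move=> t _; rewrite (ytar_invariant e e') dotcB.
exact/ll_loss_lipschitz/sgn_pm1.
Qed.
End Risk.

Local Open Scope classical_set_scope.

Theorem corollary1 (R : realType) (dT : measure_display) (T : measurableType dT)
  (P : probability T R) (m k d : nat) (u : 'I_m -> T -> R) (E : Type)
  (A : E -> 'M[R]_k) (B : E -> 'M[R]_(k, m)) (G : 'M[R]_(d, k)) (w : 'cV[R]_k)
  (Etr : seq E) (pe : E -> R) (eplus : E) (lam1 : R) (theta : 'cV[R]_d) :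
  (forall l, measurable_fun setT (u l)) ->
  (forall l, P.-integrable setT (fun t => ((u l t) ^+ 2)%:E)) ->
  lin_spurious_class A B w ->
  (forall e, inseq e Etr -> 0 <= pe e) ->
  \sum_(e <- Etr) pe e = 1 ->
  eigenvalue (Mmat P u A B G Etr pe eplus) lam1 ->
  (forall a, eigenvalue (Mmat P u A B G Etr pe eplus) a -> a <= lam1) ->
  test_risk P u A B G w eplus theta
    <= train_risk P u A B G w Etr pe theta + enorm theta * Num.sqrt lam1.
Proof.
move=> u_meas u_sq spurious pe_ge0 pe_sum1 _ lam1_ub.
set diff := fun e t => dotc theta (xobs u A B G eplus t - xobs u A B G e t).
have risk_le : test_risk P u A B G w eplus theta <=
    train_risk P u A B G w Etr pe theta
    + \sum_(e <- Etr) pe e * \int[P]_t `|diff e t|.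
  have -> : test_risk P u A B G w eplus theta =
      \sum_(e <- Etr) pe e * test_risk P u A B G w eplus theta.
    by rewrite -mulr_suml pe_sum1 mul1r.
  rewrite /train_risk -big_split /=; under [X in _ <= X]eq_bigr do rewrite -mulrDr.
  by apply: ler_wsum => // e _; exact: ll_risk_le_shift u_meas u_sq spurious _ _ _.
apply: le_trans risk_le _; rewrite lerD2l.
apply: le_mul_sqrtr; first exact: sqrtr_ge0.
apply: le_trans (sqr_wsum_le pe_ge0 pe_sum1 _) _.
have := symmetric_form_le theta^T (Mmat_sym P u A B G Etr pe eplus) lam1_ub.
rewrite !trmxK (Mmat_quad_form A B G u_meas u_sq) enorm_sqr; apply: le_trans.
apply: ler_wsum => // e _; apply: sqr_Rintegral_norm_le.
by apply: dotc_sq_integrable => i; exact: xobs_diff_sq_integrable.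
Qed.
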